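(* Let $\Sigma$ be a finite ranked set, $X$ a ranked set and $G\in\mathsf{H}X$. Then there is an operation $f$, taking an arity-respecting $X$-indexed family of models (one model $\mathcal{A}_x$ in the image of $\lceil\cdot\rceil$ on $\mathsf{H}\Sigma$ of arity equal to that of $x$ for each $x\in X$) to a model, which is compatible with counting MSO and satisfies $f\big((\lceil\eta(x)\rceil)_{x\in X}\big)=\lceil [\![G]\!](\eta)\rceil$ (up to isomorphism) for every arity-preserving valuation $\eta:X\to\mathsf{H}\Sigma$.
   Context: A ranked set is a set in which each element has an arity in $\{0,1,2,\dots\}$. A sourced hypergraph of arity $n$ over $\Sigma$: finite vertex set, finite ranked set of hyperedges labelled arity-preservingly by $\Sigma$, incidence mapping each $m$-ary hyperedge $e$ to a non-repeating list $e[1],\dots,e[m]$ of vertices, injective sources $\{1,\dots,n\}\to$ vertices; $\mathsf{H}\Sigma$ denotes these up to isomorphism. Flattening of $K\in\mathsf{H}\mathsf{H}\Sigma$: hyperedges $(e,f)$, $e$ a hyperedge of $K$, $f$ a hyperedge of the label of $e$ (label from $f$); vertices: vertices of $K$ and pairs $(e,v)$ with $v$ a non-source vertex of the label of $e$; sources from $K$; incidence of $(e,f)$ is that of $f$ with $v\mapsto(e,v)$ for non-sources and $v\mapsto e[i]$ if $v$ is the $i$-th source of the label of $e$. $[\![G]\!](\eta)$ is the flattening of the element of $\mathsf{H}\mathsf{H}\Sigma$ obtained from $G$ by replacing each label $x$ by $\eta(x)$. For $K\in\mathsf{H}\Sigma$, the model $\lceil K\rceil$ has universe the disjoint union of vertices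 and hyperedges, for each $a\in\Sigma$ a unary relation of hyperedges labelled $a$, for each $i$ up to the maximal arity in $\Sigma$ a binary relation $\{(e,v):e[i]=v\}$, and for each $i$ up to the arity of $K$ a constant for the $i$-th source. Counting MSO (in extended syntax) is MSO extended with predicates $|Y|\equiv k\bmod m$ (true iff $Y$ finite of size $\equiv k$ mod $m$), a binary set-inclusion predicate, a unary ''is a singleton'' predicate, and for every quantifier-free first-order formula $\psi(x)$ with one free variable a set constant $[\psi]$ denoting the set of elements satisfying $\psi$; quantifier rank counts first- and second-order quantifiers alike. For $r\in\mathbb{N}$ and $M\subseteq\mathbb{N}$, two models over the same vocabulary are $(r,M)$-equivalent if they satisfy the same counting MSO sentences of quantifier rank at most $r$ using only moduli from $M$. An operation on families of models is compatible with counting MSO if for all $r$ and $M$, componentwise $(r,M)$-equivalent input families yield $(r,M)$-equivalent outputs. *)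

From Stdlib Require Import List.
From mathcomp Require Import all_boot.

Set Implicit Arguments.
Unset Strict Implicit.
Unset Printing Implicit Defensive.

(* A ranked set is a type L with an arity function ar : L -> nat.           *)
(* A (raw) sourced hypergraph of arity n over (L, ar): finite vertex type,  *)
(* finite hyperedge type, a labelling of hyperedges by L; the arity of a    *)
(* hyperedge is the arity of its label (so the labelling is arity-          *)
(* preserving by construction); incidence e[0..ar(lab e)-1] (0-based) and   *)
(* sources 0..n-1 (0-based).                                                 *)

Record hgraph (L : Type) (ar : L -> nat) (n : nat) := HGraph {
  hV : finType;
  hE : finType;
  hlab : hE -> L;
  hinc : forall e : hE, 'I_(ar (hlab e)) -> hV;
  hsrc : 'I_n -> hV
}.
Arguments hV {L ar n} h.
Arguments hE {L ar n} h.
Arguments hlab {L ar n h} h0.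
Arguments hinc {L ar n h} e _.
Arguments hsrc {L ar n} h i.

Definition wf_hgraph L (ar : L -> nat) n (H : hgraph ar n) : Prop :=
  (forall e, injective (@hinc _ _ _ H e)) /\ injective (@hsrc _ _ _ H).

Section Flatten.
Variables (S : Type) (arS : S -> nat) (X : Type) (arX : X -> nat) (n : nat).
Variable G : hgraph arX n.
Variable eta : forall x : X, hgraph arS (arX x).

Definition nonsrc k (H : hgraph arS k) (v : hV H) : bool :=
  [forall i, hsrc H i != v].

Lemma pick_none_nonsrc k (H : hgraph arS k) (v : hV H) :
  [pick i | hsrc H i == v] = None -> nonsrc v.
Proof.
case: pickP => // P _; apply/forallP => i; apply/negP => /eqP E.
by have := P i; rewrite E eqxx.
Qed.

Definition resolve k (H : hgraph arS k) (v : hV H) :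
    'I_k + {w : hV H | nonsrc w} :=
  match [pick i | hsrc H i == v] as o
        return [pick i | hsrc H i == v] = o -> 'I_k + {w : hV H | nonsrc w}
  with
  | Some i => fun _ => inl i
  | None => fun h => inr (exist _ v (pick_none_nonsrc h))
  end erefl.

Definition flatE_fam (e : hE G) : finType := hE (eta (hlab e)).
Definition flatNS_fam (e : hE G) : finType :=
  {w : hV (eta (hlab e)) | nonsrc w}.

Definition flatE : finType := {e : hE G & flatE_fam e}.
Definition flatV : finType := (hV G + {e : hE G & flatNS_fam e})%type.

Definition flat_lab (p : flatE) : S :=
  @hlab _ _ _ (eta (hlab (tag p))) (tagged p).

Definition flat_inc (p : flatE) (j : 'I_(arS (flat_lab p))) : flatV :=
  match resolve (@hinc _ _ _ (eta (hlab (tag p))) (tagged p) j) with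
  | inl i => inl (@hinc _ _ _ G (tag p) i)
  | inr w => inr (Tagged flatNS_fam w)
  end.

Definition flat_subst : hgraph arS n :=
  @HGraph S arS n (hV G + {e : hE G & flatNS_fam e})%type flatE
    flat_lab flat_inc (fun i => inl (hsrc G i)).

End Flatten.

(* Models over the vocabulary of hypergraphs over a finite ranked set Sig:  *)
(* unary relations indexed by Sig, binary relations indexed by 'I_m (m the  *)
(* maximal arity; index i stands for the paper's i+1), constants 'I_n.      *)

Definition maxar (Sig : finType) (arS : Sig -> nat) : nat := \max_(a : Sig) arS a.

Record model (Sig : Type) (m n : nat) := Model {
  univ : Type;
  urel : Sig -> univ -> Prop;
  brel : 'I_m -> univ -> univ -> Prop;
  cst  : 'I_n -> univ
}.
Arguments univ {Sig m n} m.
Arguments urel {Sig m n} m _ _.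
Arguments brel {Sig m n} m _ _ _.
Arguments cst {Sig m n} m _.

Definition mdl (Sig : finType) (arS : Sig -> nat) n (K : hgraph arS n) :
    model Sig (maxar arS) n :=
  @Model Sig (maxar arS) n (hV K + hE K)%type
    (fun a z => match z with inr e => hlab e = a | inl _ => False end)
    (fun i z1 z2 => match z1, z2 with
       | inr e, inl v =>
           exists h : (i < arS (hlab e))%N, hinc e (Ordinal h) = v
       | _, _ => False end)
    (fun c => inl (hsrc K c)).

Definition model_iso Sig m n (A B : model Sig m n) : Prop :=
  exists (h : univ A -> univ B) (g : univ B -> univ A),
    cancel h g /\ cancel g h /\
    (forall a z, urel A a z <-> urel B a (h z)) /\
    (forall i z1 z2, brel A i z1 z2 <-> brel B i (h z1) (h z2)) /\
    (forall c, h (cst A c) = cst B c).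

Section CMSO.
Variables (Sig : Type) (m n : nat).

(* quantifier-free first-order formulas psi(x) with one free variable x *)
Inductive qterm := QX | QC of 'I_n.
Inductive qf :=
  | QUn of Sig & qterm
  | QBin of 'I_m & qterm & qterm
  | QEq of qterm & qterm
  | QNot of qf
  | QAnd of qf & qf.

Inductive fterm := FVar of nat | FCst of 'I_n.
Inductive sterm := SVar of nat | SCst of qf.

Inductive cmso :=
  | CUn of Sig & fterm
  | CBin of 'I_m & fterm & fterm
  | CEq of fterm & fterm
  | CMem of fterm & sterm
  | CCard of sterm & nat & nat
  | CSub of sterm & sterm
  | CSing of sterm
  | CNot of cmso
  | CAnd of cmso & cmso
  | CEx1 of nat & cmso
  | CEx2 of nat & cmso.

Fixpoint qrank (f : cmso) : nat :=
  match f with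
  | CNot g => qrank g
  | CAnd g h => maxn (qrank g) (qrank h)
  | CEx1 _ g | CEx2 _ g => (qrank g).+1
  | _ => 0
  end.

Fixpoint moduli_in (M : nat -> Prop) (f : cmso) : Prop :=
  match f with
  | CCard _ _ p => M p /\ (0 < p)%N
  | CNot g => moduli_in M g
  | CAnd g h => moduli_in M g /\ moduli_in M h
  | CEx1 _ g | CEx2 _ g => moduli_in M g
  | _ => True
  end.

Definition fterm_ok (b1 : seq nat) (t : fterm) : bool :=
  match t with FVar i => i \in b1 | FCst _ => true end.
Definition sterm_ok (b2 : seq nat) (Y : sterm) : bool :=
  match Y with SVar j => j \in b2 | SCst _ => true end.

Fixpoint closed_in (b1 b2 : seq nat) (f : cmso) : bool :=
  match f with
  | CUn _ t => fterm_ok b1 t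
  | CBin _ t u | CEq t u => fterm_ok b1 t && fterm_ok b1 u
  | CMem t Y => fterm_ok b1 t && sterm_ok b2 Y
  | CCard Y _ _ | CSing Y => sterm_ok b2 Y
  | CSub Y Z => sterm_ok b2 Y && sterm_ok b2 Z
  | CNot g => closed_in b1 b2 g
  | CAnd g h => closed_in b1 b2 g && closed_in b1 b2 h
  | CEx1 i g => closed_in (i :: b1) b2 g
  | CEx2 j g => closed_in b1 (j :: b2) g
  end.

Definition sentence (f : cmso) : bool := closed_in [::] [::] f.

Variable A : model Sig m n.

Definition qterm_val (x : univ A) (t : qterm) : univ A :=
  match t with QX => x | QC c => cst A c end.

Fixpoint qf_sat (x : univ A) (p : qf) : Prop :=
  match p with
  | QUn a t => urel A a (qterm_val x t)
  | QBin i t u => brel A i (qterm_val x t) (qterm_val x u)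
  | QEq t u => qterm_val x t = qterm_val x u
  | QNot q => ~ qf_sat x q
  | QAnd q r => qf_sat x q /\ qf_sat x r
  end.

Definition card_mod (Y : univ A -> Prop) (k p : nat) : Prop :=
  exists l : list (univ A), NoDup l /\ (forall z, Y z <-> In z l) /\
    length l = k %[mod p].

Definition env1 := nat -> option (univ A).
Definition env2 := nat -> (univ A -> Prop).

Definition fterm_val (r1 : env1) (t : fterm) : option (univ A) :=
  match t with FVar i => r1 i | FCst c => Some (cst A c) end.
Definition sterm_val (r2 : env2) (Y : sterm) : univ A -> Prop :=
  match Y with SVar j => r2 j | SCst p => fun z => qf_sat z p end.

Fixpoint sat (r1 : env1) (r2 : env2) (f : cmso) : Prop :=
  match f with
  | CUn a t => exists z, fterm_val r1 t = Some z /\ urel A a z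
  | CBin i t u => exists z1 z2, fterm_val r1 t = Some z1 /\
                   fterm_val r1 u = Some z2 /\ brel A i z1 z2
  | CEq t u => exists z, fterm_val r1 t = Some z /\ fterm_val r1 u = Some z
  | CMem t Y => exists z, fterm_val r1 t = Some z /\ sterm_val r2 Y z
  | CCard Y k p => card_mod (sterm_val r2 Y) k p
  | CSub Y Z => forall z, sterm_val r2 Y z -> sterm_val r2 Z z
  | CSing Y => exists z, forall z', sterm_val r2 Y z' <-> z' = z
  | CNot g => ~ sat r1 r2 g
  | CAnd g h => sat r1 r2 g /\ sat r1 r2 h
  | CEx1 i g => exists z : univ A,
      sat (fun i' => if i' == i then Some z else r1 i') r2 g
  | CEx2 j g => exists Z : univ A -> Prop,
      sat r1 (fun j' => if j' == j then Z else r2 j') g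
  end.

Definition models (f : cmso) : Prop := sat (fun _ => None) (fun _ _ => False) f.

End CMSO.

Definition rM_equiv Sig m n (r : nat) (M : nat -> Prop) (A B : model Sig m n)
  : Prop :=
  forall f : cmso Sig m n, sentence f -> (qrank f <= r)%N -> moduli_in M f ->
    (models A f <-> models B f).

Definition cmso_compatible Sig (m : nat) (X : Type) (arX : X -> nat) (n : nat)
    (dom : forall x, model Sig m (arX x) -> Prop)
    (f : (forall x : X, model Sig m (arX x)) -> model Sig m n) : Prop :=
  forall (r : nat) (M : nat -> Prop) (A B : forall x, model Sig m (arX x)),
    (forall x, dom x (A x)) -> (forall x, dom x (B x)) ->
    (forall x, rM_equiv r M (A x) (B x)) ->
    rM_equiv r M (f A) (f B).

Definition in_image (Sig : finType) (arS : Sig -> nat) k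
    (A : model Sig (maxar arS) k) : Prop :=
  exists K : hgraph arS k, wf_hgraph K /\ model_iso A (mdl K).

(* The operation glues a copy of [A (hlab e)] onto every hyperedge [e] of [G], identifying
   its [c]-th constant with the attachment vertex [hinc e c] and adding its other elements as
   new ones; on the models of the [eta x] this is the model of the flattening.
   Compatibility with counting MSO is a Feferman-Vaught argument. To a formula [f] and a
   hyperedge [e] we associate finitely many formulas over the component at [e], of no larger
   quantifier rank and with the same moduli and free variables, such that the truth of [f] in
   the glued model only depends on the assignment restricted to the vertices of [G] and on
   which of these local formulas hold in each component. A first-order witness lies on a
   vertex, and is then invisible to every component, or in a single component, where it is
   described by the truth values of the local formulas of the body; a set witness splits into
   its parts on the components; a modulo-counting atom adds up the counts over the vertices
   and the components. *)

From Stdlib Require Import List ClassicalEpsilon ProofIrrelevance.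
From Stdlib Require Import FunctionalExtensionality PropExtensionality.
From mathcomp Require Import all_boot zify.
Import ProofIrrelevanceTheory.

Set Implicit Arguments.
Unset Strict Implicit.
Unset Printing Implicit Defensive.

Arguments QX {n}. Arguments QC {n} _.
Arguments QUn {Sig m n} _ _. Arguments QBin {Sig m n} _ _ _. Arguments QEq {Sig m n} _ _.
Arguments FVar {n} _. Arguments FCst {n} _. Arguments SVar {Sig m n} _.
Arguments CUn {Sig m n} _ _. Arguments CBin {Sig m n} _ _ _. Arguments CEq {Sig m n} _ _.

Local Notation upd r x v := (fun i => if i == x then v else r i).

Definition asbool (P : Prop) : bool := if excluded_middle_informative P then true else false.

Lemma asboolP (P : Prop) : reflect P (asbool P).
Proof. by rewrite /asbool; case: excluded_middle_informative => H; constructor. Qed.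

Section ListMembership.
Variables S T : Type.

Lemma In_map (f : S -> T) (s : seq S) y : In y (map f s) <-> exists2 x, In x s & y = f x.
Proof.
elim: s => [|x s IH] /=; first by split => // -[].
rewrite IH; split.
- by case=> [<-|[x' x's ->]]; [exists x; first left | exists x'; first right].
- by case=> x' [<-|x's] ->; [left | right; exists x'].
Qed.

Lemma In_cat (s1 s2 : seq T) y : In y (s1 ++ s2) <-> In y s1 \/ In y s2.
Proof. by elim: s1 => [|x s1 IH] /=; [tauto | rewrite IH; tauto]. Qed.

Lemma In_pmap (f : S -> option T) (s : seq S) y :
  In y (pmap f s) <-> exists2 x, In x s & f x = Some y.
Proof.
elim: s => [|x s IH] /=; first by split => // -[].
case Efx: (f x) => [z|] /=; rewrite IH; split.
- by case=> [<-|[x' x's fx']]; [exists x; first left | exists x'; first right].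
- by case=> x' [<-|x's] fx'; [left; congruence | right; exists x'].
- by case=> x' x's fx'; exists x'; first right.
- by case=> x' [<-|x's] fx'; [congruence | exists x'].
Qed.

Lemma NoDup_map_in (f : S -> T) (s : seq S) :
  (forall x y, In x s -> In y s -> f x = f y -> x = y) -> NoDup s -> NoDup (map f s).
Proof.
elim: s => [|x s IH] /= f_inj; first by constructor.
move=> /NoDup_cons_iff [x_notin s_nd]; constructor; last first.
  by apply: IH => // y z ys zs; apply: f_inj; right.
case/In_map => y ys fx_fy; apply: x_notin.
by rewrite (f_inj x y) //; [left | right].
Qed.

End ListMembership.

Lemma In_mem (T : eqType) (x : T) (s : seq T) : In x s <-> x \in s.
Proof.
elim: s => [|y s IH] //=; rewrite inE IH.
by split => [[->|->]|/orP[/eqP->|]]; rewrite ?eqxx ?orbT; auto.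
Qed.

Lemma In_enum (T : finType) (x : T) : In x (enum T).
Proof. by rewrite In_mem mem_enum. Qed.

Lemma NoDup_uniq (T : eqType) (s : seq T) : uniq s -> NoDup s.
Proof.
elim: s => [|x s IH] /=; first by constructor.
by case/andP => x_notin /IH s_nd; constructor; rewrite // In_mem; apply/negP.
Qed.

Section FiniteCardinality.
Variable T : Type.
Implicit Types (P Q : T -> Prop) (l : list T).

Definition fin_card P (N : nat) : Prop :=
  exists l, NoDup l /\ (forall z, P z <-> In z l) /\ length l = N.

Lemma fin_card_unique P N N' : fin_card P N -> fin_card P N' -> N = N'.
Proof.
move=> [l [l_nd [Pl <-]]] [l' [l'_nd [Pl' <-]]].
by apply/anti_leq/andP; split; apply/leP; apply: NoDup_incl_length => // z; rewrite -Pl -Pl'.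
Qed.

Lemma fin_card_ext P Q N : fin_card P N -> (forall z, P z <-> Q z) -> fin_card Q N.
Proof. by move=> [l [l_nd [Pl lN]]] PQ; exists l; split => //; split => // z; rewrite -PQ. Qed.

Lemma fin_card0 : fin_card (fun _ => False) 0.
Proof. by exists nil; split; [constructor | split]. Qed.

Lemma fin_card_union P Q a b :
  (forall z, P z -> Q z -> False) -> fin_card P a -> fin_card Q b ->
  fin_card (fun z => P z \/ Q z) (a + b).
Proof.
move=> PQ0 [l [l_nd [Pl <-]]] [l' [l'_nd [Ql' <-]]]; exists (l ++ l'); split; [|split].
- by apply: NoDup_app => // z /Pl Pz /Ql' Qz; apply: PQ0 Pz Qz.
- by move=> z; rewrite In_cat Pl Ql'.
- by rewrite length_app.
Qed.

Lemma fin_card_cover P l : (forall z, P z -> In z l) -> exists N, fin_card P N.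
Proof.
elim: l P => [|a l IH] P Pl.
  by exists 0, nil; split; [constructor | split => // z; split => // /Pl].
have [N [l' [l'_nd [Pl' _]]]] : exists N, fin_card (fun z => P z /\ z <> a) N.
  by apply: IH => z [/Pl [->|] //].
case: (excluded_middle_informative (P a)) => Pa.
- exists (length (a :: l')), (a :: l'); split; last split => //.
  + by constructor => // /Pl' [].
  + move=> z; split => [Pz|[<-//|/Pl' []//]].
    by case: (excluded_middle_informative (z = a)) => [->|za]; [left | right; apply/Pl'].
- exists (length l'), l'; split; first by [].
  split => // z; split => [Pz|/Pl' []//].
  by apply/Pl'; split => // za; apply: Pa; rewrite -za.
Qed.

End FiniteCardinality.

Arguments fin_card0 {T}.

Lemma fin_card_image (T S : Type) (f : T -> S) (P : T -> Prop) N :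
  (forall x y, P x -> P y -> f x = f y -> x = y) -> fin_card P N ->
  fin_card (fun u => exists2 z, P z & u = f z) N.
Proof.
move=> f_inj [l [l_nd [Pl <-]]]; exists (map f l); split; [|split].
- by apply: NoDup_map_in => // x y /Pl Px /Pl Py; apply: f_inj.
- by move=> u; rewrite In_map; split => -[z Pz ->]; exists z => //; apply/Pl.
- exact: length_map.
Qed.

Section CardMod.
Variables (Sig : Type) (m n : nat) (A : model Sig m n).
Implicit Types (P Q : univ A -> Prop).

Lemma card_modE P k p : card_mod P k p <-> exists2 N, fin_card P N & N = k %[mod p].
Proof.
split => [[l [l_nd [Pl lk]]]|[_ [l [l_nd [Pl <-]]] lk]]; last by exists l.
by exists (length l) => //; exists l.
Qed.

Lemma card_mod_ext P Q k p : (forall z, P z <-> Q z) -> card_mod P k p -> card_mod Q k p.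
Proof. by move=> PQ /card_modE [N /fin_card_ext/(_ PQ) PN Nk]; apply/card_modE; exists N. Qed.

Lemma card_mod_modn P k p : card_mod P (k %% p) p <-> card_mod P k p.
Proof. by rewrite !card_modE; split => -[N PN Nk]; exists N; rewrite // Nk ?modn_mod. Qed.

End CardMod.

Section Combinators.
Variables (Sig : Type) (m n : nat).
Local Notation formula := (cmso Sig m n).
Implicit Types (f g : formula) (gs : seq formula).

Definition qf_true : qf Sig m n := QEq QX QX.
Definition qf_false : qf Sig m n := QNot qf_true.
Definition cmso_true : formula := CSub (SCst qf_true) (SCst qf_true).
Definition cmso_false : formula := CNot cmso_true.

Definition qf_or (qs : seq (qf Sig m n)) : qf Sig m n :=
  foldr (fun q acc => QNot (QAnd (QNot q) (QNot acc))) qf_false qs.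

Definition qf_nonconst : qf Sig m n :=
  foldr (fun c acc => QAnd (QNot (QEq QX (QC c))) acc) qf_true (enum 'I_n).

Definition is_var (x : nat) (t : fterm n) : bool := if t is FVar y then y == x else false.

Fixpoint drop_var (x : nat) f : formula :=
  match f with
  | CUn _ t | CMem t _ => if is_var x t then cmso_false else f
  | CBin _ t u | CEq t u => if is_var x t || is_var x u then cmso_false else f
  | CNot g => CNot (drop_var x g)
  | CAnd g h => CAnd (drop_var x g) (drop_var x h)
  | CEx1 y g => if y == x then f else CEx1 y (drop_var x g)
  | CEx2 Y g => CEx2 Y (drop_var x g)
  | _ => f
  end.

Fixpoint conj_signs (bs : seq bool) gs : formula :=
  match bs, gs with
  | b :: bs', g :: gs' => CAnd (if b then g else CNot g) (conj_signs bs' gs')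
  | _, _ => cmso_true
  end.

Fixpoint sign_vectors (k : nat) : seq (seq bool) :=
  if k is k'.+1 then
    [seq true :: s | s <- sign_vectors k'] ++ [seq false :: s | s <- sign_vectors k']
  else [:: [::]].

Lemma In_sign_vectors (bs : seq bool) : In bs (sign_vectors (size bs)).
Proof.
elim: bs => [|b bs IH] /=; first by left.
by apply/In_cat; case: b; [left | right]; apply/In_map; exists bs.
Qed.

Definition in_fragment (r : nat) (M : nat -> Prop) (b1 b2 : seq nat) f : Prop :=
  [/\ qrank f <= r, moduli_in M f & closed_in b1 b2 f].

Lemma closed_in_subset b1 b2 b1' b2' f :
  {subset b1 <= b1'} -> {subset b2 <= b2'} -> closed_in b1 b2 f -> closed_in b1' b2' f.
Proof.
have fterm_sub b b' (t : fterm n) : {subset b <= b'} -> fterm_ok b t -> fterm_ok b' t.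
  by case: t => //= i /[apply].
have sterm_sub b b' (Y : sterm Sig m n) : {subset b <= b'} -> sterm_ok b Y -> sterm_ok b' Y.
  by case: Y => //= i /[apply].
have cons_sub x b b' : {subset b <= b'} -> {subset x :: b <= x :: b'}.
  by move=> bb' y; rewrite !inE => /orP[->|/bb' ->]; rewrite ?orbT.
elim: f b1 b2 b1' b2' => /= [_ t|_ t u|t u|t Y|Y _ _|Y Z|Y|g IH|g IHg h IHh|x g IH|Y g IH]
    b1 b2 b1' b2' sub1 sub2.
- exact: fterm_sub.
- by case/andP => *; apply/andP; split; apply: fterm_sub sub1 _.
- by case/andP => *; apply/andP; split; apply: fterm_sub sub1 _.
- by case/andP => *; apply/andP; split; [apply: fterm_sub sub1 _ | apply: sterm_sub sub2 _].
- exact: sterm_sub.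
- by case/andP => *; apply/andP; split; apply: sterm_sub sub2 _.
- exact: sterm_sub.
- exact: IH.
- by case/andP => *; apply/andP; split; [apply: IHg sub1 sub2 _ | apply: IHh sub1 sub2 _].
- exact/IH/sub2/cons_sub.
- exact/IH/cons_sub.
Qed.

Lemma in_fragment_drop_var r M b1 b2 x f :
  in_fragment r M (x :: b1) b2 f -> in_fragment r M b1 b2 (drop_var x f).
Proof.
have fterm_drop b (t : fterm n) : fterm_ok (x :: b) t -> ~~ is_var x t -> fterm_ok b t.
  by case: t => //= i; rewrite inE => /orP[/eqP->|//]; rewrite eqxx.
elim: f r b1 b2 => /= [a t|i t u|t u|t Y|Y k p|Y Z|Y|g IH|g IHg h IHh|y g IH|Y g IH] r b1 b2;
  rewrite /in_fragment /=.
- by case: ifPn => // nx [? ? ct]; split => //; apply: fterm_drop.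
- case: ifPn => //; rewrite negb_or => /andP[? ?] [? ? /andP[? ?]].
  by split => //; apply/andP; split; apply: fterm_drop.
- case: ifPn => //; rewrite negb_or => /andP[? ?] [? ? /andP[? ?]].
  by split => //; apply/andP; split; apply: fterm_drop.
- case: ifPn => // nx [? ? /andP[ct cY]].
  by split => //; apply/andP; split => //; apply: fterm_drop.
- by [].
- by [].
- by [].
- exact: IH.
- rewrite !geq_max => -[/andP[rg rh] [Mg Mh] /andP[cg ch]].
  have [? ? ?] := IHg r b1 b2 (And3 rg Mg cg); have [? ? ?] := IHh r b1 b2 (And3 rh Mh ch).
  by split; rewrite /= ?geq_max //; apply/andP.
- case: eqP => [->|_] [rg Mg cg].
    by split => //; apply: closed_in_subset cg => // z; rewrite !inE orbA orbb.
  have [? ? ?] : in_fragment r.-1 M (y :: b1) b2 (drop_var x g).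
    apply: IH; split => //; first lia.
    by apply: closed_in_subset cg => // z; rewrite !inE orbCA.
  by split => //=; lia.
- move=> [rg Mg cg]; have [? ? ?] : in_fragment r.-1 M b1 (Y :: b2) (drop_var x g).
    by apply: IH; split => //; lia.
  by split => //=; lia.
Qed.

Lemma in_fragment_conj_signs r M b1 b2 bs gs :
  (forall g, In g gs -> in_fragment r M b1 b2 g) -> in_fragment r M b1 b2 (conj_signs bs gs).
Proof.
elim: gs bs => [|g gs IH] [|b bs] //= gs_frag.
have [rg Mg cg] := gs_frag g (or_introl erefl).
have [? ? ?] := IH bs (fun g' g'_in => gs_frag g' (or_intror g'_in)).
by case: b; split; rewrite /= ?geq_max ?rg ?cg //; apply/andP.
Qed.

Section Semantics.
Variable A : model Sig m n.

Lemma qf_or_sat (z : univ A) qs : qf_sat z (qf_or qs) <-> exists2 q, In q qs & qf_sat z q.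
Proof.
elim: qs => [|q qs IH] /=; first by split => [zz|[]//]; case: zz.
split=> [not_none|[q' [<-|q'_in] q'z] [nq nqs]]; last 2 first.
- exact: nq.
- by apply: nqs; apply/IH; exists q'.
case: (excluded_middle_informative (qf_sat z q)) => [qz|nq]; first by exists q; first left.
case: (excluded_middle_informative (qf_sat z (qf_or qs))) => [/IH [q' ? ?]|nqs].
  by exists q'; first right.
by case: not_none.
Qed.

Lemma qf_nonconst_sat (z : univ A) : qf_sat z qf_nonconst <-> forall c, cst A c <> z.
Proof.
suff -> : qf_sat z qf_nonconst <-> forall c, In c (enum 'I_n) -> cst A c <> z.
  by split => nc c; [apply/nc/In_enum | move=> _; apply: nc].
rewrite /qf_nonconst; elim: (enum 'I_n) => [|c cs IH] /=; first by split.
rewrite IH; split => [[nzc ncs] c' [<-|/ncs //]|nc]; first by move/esym.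
by split => [zc|c' c'_in]; [apply: (nc c); [left | rewrite zc] | apply: nc; right].
Qed.

Lemma sat_drop_var x f (r1 : env1 A) (r2 : env2 A) :
  sat r1 r2 (drop_var x f) <-> sat (upd r1 x None) r2 f.
Proof.
have val_upd r (t : fterm n) :
    fterm_val (upd r x None) t = if is_var x t then None else fterm_val (A := A) r t.
  by case: t => //= i; case: eqP.
elim: f r1 r2 => /= [a t|i t u|t u|t Y|Y k p|Y Z|Y|g IH|g IHg h IHh|y g IH|Y g IH] r1 r2;
  rewrite ?val_upd.
- by case: ifP => //= _; split => // -[z []].
- by case: (is_var x t); case: (is_var x u) => //=; split => // -[z1 [z2 [? [? ?]]]].
- by case: (is_var x t); case: (is_var x u) => //=; split => // -[z [? ?]].
- by case: ifP => //= _; split => // -[z []].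
- by [].
- by [].
- by [].
- by rewrite IH.
- by rewrite IHg IHh.
- case: eqP => [->|yx] /=.
    have upd_upd z : upd (upd r1 x None) x (Some z) = upd r1 x (Some z).
      by apply: functional_extensionality => i; case: eqP.
    by split => -[z gz]; exists z; move: gz; rewrite upd_upd.
  have upd_comm z : upd (upd r1 y (Some z)) x None = upd (upd r1 x None) y (Some z).
    apply: functional_extensionality => i; case: (eqVneq i x) => [->|//].
    by case: eqP => // xy; case: yx.
  by split => -[z gz]; exists z; move: gz; rewrite IH upd_comm.
- by split => -[Z gZ]; exists Z; move: gZ; rewrite IH.
Qed.

Definition truth_signs (r1 : env1 A) (r2 : env2 A) gs : seq bool :=
  [seq asbool (sat r1 r2 g) | g <- gs].

Lemma In_truth_signs (r1 : env1 A) (r2 : env2 A) gs :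
  In (truth_signs r1 r2 gs) (sign_vectors (size gs)).
Proof. by have := In_sign_vectors (truth_signs r1 r2 gs); rewrite size_map. Qed.

Lemma sat_conj_truth_signs (r1 : env1 A) (r2 : env2 A) gs :
  sat r1 r2 (conj_signs (truth_signs r1 r2 gs) gs).
Proof.
elim: gs => [|g gs IH] //=; split => //.
by case: asboolP.
Qed.

Lemma conj_truth_signs_agree (B : model Sig m n) (r1 : env1 A) (r2 : env2 A)
    (r1' : env1 B) (r2' : env2 B) gs :
  sat r1' r2' (conj_signs (truth_signs r1 r2 gs) gs) ->
  forall g, In g gs -> (sat r1 r2 g <-> sat r1' r2' g).
Proof.
elim: gs => [|g gs IH] //= [g_sign gs_signs] g' [<-|/IH]; last exact.
by move: g_sign; case: asboolP.
Qed.

End Semantics.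
End Combinators.

Arguments qf_true {Sig m n}. Arguments qf_false {Sig m n}. Arguments qf_nonconst {Sig m n}.
Arguments cmso_true {Sig m n}. Arguments cmso_false {Sig m n}.


Section Glue.
Variables (Sig : Type) (m : nat) (X : Type) (arX : X -> nat) (n : nat) (G : hgraph arX n).
Variable A : forall x : X, model Sig m (arX x).

Definition component (e : hE G) : model Sig m (arX (hlab e)) := A (hlab e).
Definition nonconst e (z : univ (component e)) : Prop := forall c, cst (component e) c <> z.
Arguments nonconst : clear implicits.
Definition inner e : Type := {z : univ (component e) | nonconst e z}.
Definition glue_univ : Type := (hV G + {e : hE G & inner e})%type.

Definition embed e (z : univ (component e)) : glue_univ :=
  match excluded_middle_informative (exists c, cst (component e) c = z) with
  | left is_cst => inl (hinc e (proj1_sig (constructive_indefinite_description _ is_cst)))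
  | right not_cst => inr (existT inner e (exist _ z (fun c zc => not_cst (ex_intro _ c zc))))
  end.
Arguments embed : clear implicits.

Definition glue_urel a (u : glue_univ) : Prop :=
  if u is inr (existT e w) then urel (component e) a (sval w) else False.

Definition glue_brel i (u1 u2 : glue_univ) : Prop :=
  if u1 is inr (existT e w) then exists2 z, embed e z = u2 & brel (component e) i (sval w) z
  else False.

Definition glue : model Sig m n :=
  @Model Sig m n glue_univ glue_urel glue_brel (fun c => inl (hsrc G c)).

Definition comp_part e (P : glue_univ -> Prop) (z : univ (component e)) : Prop :=
  nonconst e z /\ P (embed e z).
Arguments comp_part : clear implicits.

Definition vertex_part (P : glue_univ -> Prop) : {set hV G} := [set v | asbool (P (inl v))].

Definition to_comp e (u : glue_univ) : option (univ (component e)) :=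
  if u is inr (existT e' w) then
    if e' =P e is ReflectT e'e then Some (sval (eq_rect e' inner w e e'e)) else None
  else None.

Definition proj_env1 e (r1 : env1 glue) : env1 (component e) := fun i => obind (to_comp e) (r1 i).
Definition proj_env2 e (r2 : env2 glue) : env2 (component e) := fun j => comp_part e (r2 j).
Arguments proj_env1 : clear implicits.
Arguments proj_env2 : clear implicits.

Lemma inner_inj e (w w' : inner e) : sval w = sval w' -> w = w'.
Proof. by case: w w' => [z p] [z' p'] /= zz'; apply: subset_eq_compat. Qed.

Lemma glue_inr_tag e e' (w : inner e) (w' : inner e') :
  inr (existT inner e w) = inr (existT inner e' w') :> glue_univ -> e = e'.
Proof. by case. Qed.

Lemma glue_inr_inj e (w w' : inner e) :
  inr (existT inner e w) = inr (existT inner e w') :> glue_univ -> w = w'.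
Proof. by case=> ww'; apply: inj_pair2 ww'. Qed.

Lemma const_or_inner e (z : univ (component e)) :
  (exists c, z = cst (component e) c) \/ (exists w : inner e, z = sval w).
Proof.
case: (excluded_middle_informative (exists c, cst (component e) c = z)) => [[c <-]|not_cst].
  by left; exists c.
by right; exists (exist _ z (fun c zc => not_cst (ex_intro _ c zc))).
Qed.

Lemma embed_inner e (w : inner e) : embed e (sval w) = inr (existT inner e w).
Proof.
rewrite /embed; case: excluded_middle_informative => [[c wc]|not_cst].
  by case: (svalP w c).
by congr (inr (existT _ _ _)); apply: inner_inj.
Qed.

Lemma embed_nonconst e z (nz : nonconst e z) : embed e z = inr (existT inner e (exist _ z nz)).
Proof. exact: (embed_inner (exist _ z nz)). Qed.

Lemma comp_part_inner e P (w : inner e) : comp_part e P (sval w) <-> P (inr (existT inner e w)).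
Proof. by rewrite /comp_part embed_inner; split => [[]|Pw] //; split => //; apply: svalP. Qed.

Lemma embed_inr e z (w : inner e) : embed e z = inr (existT inner e w) -> z = sval w.
Proof.
case: (const_or_inner z) => [[c ->]|[w' ->]]; last by rewrite embed_inner => /glue_inr_inj ->.
by rewrite /embed; case: excluded_middle_informative => // -[]; exists c.
Qed.

Lemma to_comp_inner e (w : inner e) : to_comp e (inr (existT inner e w)) = Some (sval w).
Proof. by rewrite /=; case: eqP => // e'e; rewrite (eq_irrelevance e'e erefl). Qed.

Lemma to_comp_Some e u z :
  to_comp e u = Some z -> exists2 w : inner e, u = inr (existT inner e w) & sval w = z.
Proof. by case: u => [//|[e' w]] /=; case: eqP => // e'e [<-]; subst e'; exists w. Qed.

Lemma to_comp_other e e' (w : inner e') : e' <> e -> to_comp e (inr (existT inner e' w)) = None.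
Proof. by rewrite /=; case: eqP. Qed.

Lemma proj_env1_inner e (r1 : env1 glue) i (w : inner e) :
  r1 i = Some (inr (existT inner e w)) -> proj_env1 e r1 i = Some (sval w).
Proof. by rewrite /proj_env1 => ->; apply: to_comp_inner. Qed.

Lemma proj_env1_Some e (r1 : env1 glue) i z :
  proj_env1 e r1 i = Some z ->
  exists2 w : inner e, r1 i = Some (inr (existT inner e w)) & sval w = z.
Proof. by rewrite /proj_env1; case: (r1 i) => //= u /to_comp_Some [w ->]; exists w. Qed.

Lemma proj_env1_upd e (r1 : env1 glue) (x : nat) (u : glue_univ) :
  proj_env1 e (upd r1 x (Some u)) = upd (proj_env1 e r1) x (to_comp e u).
Proof. by apply: functional_extensionality => i; rewrite /proj_env1; case: (i == x). Qed.

Lemma proj_env2_upd e (r2 : env2 glue) (Y : nat) (P : glue_univ -> Prop) :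
  proj_env2 e (upd r2 Y P) = upd (proj_env2 e r2) Y (comp_part e P).
Proof. by apply: functional_extensionality => j; rewrite /proj_env2; case: (j == Y). Qed.

Section InjectiveConstants.
Hypothesis cst_inj : forall x, injective (cst (A x)).

Lemma embed_cst e c : embed e (cst (component e) c) = inl (hinc e c).
Proof.
rewrite /embed; case: excluded_middle_informative => [is_cst|[]]; last by exists c.
by case: constructive_indefinite_description => c' /= /cst_inj ->.
Qed.

Lemma embed_inl e z v : embed e z = inl v <-> exists2 c, z = cst (component e) c & hinc e c = v.
Proof.
case: (const_or_inner z) => [[c ->]|[w ->]]; rewrite ?embed_cst ?embed_inner.
- by split => [[<-]|[c' /cst_inj -> <-]]; first exists c.
- by split => // -[c wc _]; case: (svalP w c).
Qed.

End InjectiveConstants.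

End Glue.

Arguments nonconst {Sig m X arX n G A} e z.
Arguments embed {Sig m X arX n G A} e z.
Arguments comp_part {Sig m X arX n G A} e P z.
Arguments proj_env1 {Sig m X arX n G A} e r1 _.
Arguments proj_env2 {Sig m X arX n G A} e r2 _ _.

Section LocalTranslation.
Variables (Sig : Type) (m : nat) (X : Type) (arX : X -> nat) (n : nat) (G : hgraph arX n).
Variable e : hE G.
Local Notation k := (arX (hlab e)).

Fixpoint local_qf (q : qf Sig m n) : qf Sig m k :=
  match q with
  | QUn a QX => QUn a QX
  | QBin i QX QX => QBin i QX QX
  | QBin i QX (QC d) => qf_or [seq QBin i QX (QC c) | c <- enum 'I_k & hinc e c == hsrc G d]
  | QEq QX QX => qf_true
  | QEq (QC c) (QC d) => if hsrc G c == hsrc G d then qf_true else qf_false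
  | QNot q => QNot (local_qf q)
  | QAnd q q' => QAnd (local_qf q) (local_qf q')
  | _ => qf_false
  end.

Definition local_set (Y : sterm Sig m n) : sterm Sig m k :=
  match Y with
  | SVar j => SVar j
  | SCst q => SCst (QAnd qf_nonconst (local_qf q))
  end.

(* The witness of [CEx1 x g] either lies outside the component, where [x] is then undefined,
   or inside it, where it is described by which local formulas of [g] it satisfies. *)
Fixpoint local_formulas (f : cmso Sig m n) : seq (cmso Sig m k) :=
  match f with
  | CUn a (FVar x) => [:: CUn a (FVar x)]
  | CBin i (FVar x) u =>
      [seq CBin i (FVar x) (FCst c) | c <- enum 'I_k] ++
      (if u is FVar y then [:: CBin i (FVar x) (FVar y)] else [::])
  | CEq (FVar x) (FVar y) => [:: CEq (FVar x) (FVar y)]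
  | CMem (FVar x) Y => [:: CMem (FVar x) (local_set Y)]
  | CCard Y _ p => [seq CCard (local_set Y) j p | j <- iota 0 p]
  | CSub Y Z => [:: CSub (local_set Y) (local_set Z)]
  | CSing Y => [:: CSing (local_set Y); CSub (local_set Y) (SCst qf_false)]
  | CNot g => local_formulas g
  | CAnd g h => local_formulas g ++ local_formulas h
  | CEx1 x g =>
      let gs := local_formulas g in
      [seq drop_var x g' | g' <- gs] ++
      [seq CEx1 x (CAnd (CMem (FVar x) (SCst qf_nonconst)) (conj_signs bs gs))
      | bs <- sign_vectors (size gs)]
  | CEx2 Y g =>
      let gs := local_formulas g in
      [seq CEx2 Y (CAnd (CSub (SVar Y) (SCst qf_nonconst)) (conj_signs bs gs))
      | bs <- sign_vectors (size gs)]
  | _ => [::]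
  end.

Lemma local_formulas_fragment r M b1 b2 f :
  in_fragment r M b1 b2 f -> forall g, In g (local_formulas f) -> in_fragment r M b1 b2 g.
Proof.
have set_ok b Y : sterm_ok b (local_set Y) = sterm_ok b Y by case: Y.
elim: f r b1 b2 => [a t|i t u|t u|t Y|Y k' p|Y Z|Y|g IH|g IHg h IHh|x g IH|Y g IH] r b1 b2;
  rewrite /in_fragment /=.
- by case: t => //= x [? ? ?] g [<-|].
- case: t => //= x [? ? /andP[xb ub]] g /In_cat [/In_map [c _ ->]|].
    by split => //=; rewrite andbT.
  by case: u ub => //= y yb [<-|] //; split => //=; apply/andP.
- by case: t => // x; case: u => //= y [? ? ?] g [<-|].
- by case: t => //= x [? ? /andP[? ?]] g [<-|] //; split; rewrite //= set_ok; apply/andP.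
- by move=> [? ? ?] g /In_map [j _ ->]; split; rewrite //= set_ok.
- by move=> [? ? /andP[? ?]] g [<-|] //; split; rewrite //= !set_ok; apply/andP.
- by move=> [? ? ?] g [<-|[<-|]] //; split; rewrite //= set_ok ?andbT.
- exact: IH.
- rewrite geq_max => -[/andP[rg rh] [Mg Mh] /andP[cg ch]] g' /In_cat [].
  + exact: IHg (And3 rg Mg cg) g'.
  + exact: IHh (And3 rh Mh ch) g'.
- move=> [rg Mg cg]; have rg' : qrank g <= r.-1 by lia.
  have {}IH := IH r.-1 (x :: b1) b2 (And3 rg' Mg cg).
  move=> _ /In_cat [/In_map [g' g'_in ->]|/In_map [bs _ ->]].
  + have [? ? ?] := in_fragment_drop_var (IH g' g'_in).
    by split => //; lia.
  + have [? ? ?] := in_fragment_conj_signs bs IH.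
    by split => /=; rewrite ?inE ?eqxx //; lia.
- move=> [rg Mg cg]; have rg' : qrank g <= r.-1 by lia.
  have {}IH := IH r.-1 b1 (Y :: b2) (And3 rg' Mg cg).
  move=> _ /In_map [bs _ ->].
  have [? ? ?] := in_fragment_conj_signs bs IH.
  by split => /=; rewrite ?inE ?eqxx //; lia.
Qed.

End LocalTranslation.

Section LocalSemantics.
Variables (Sig : Type) (m : nat) (X : Type) (arX : X -> nat) (n : nat) (G : hgraph arX n).
Variable A : forall x : X, model Sig m (arX x).
Hypothesis cst_inj : forall x, injective (cst (A x)).
Local Notation glue := (glue G A).

Lemma local_qf_sat e (w : inner A e) q :
  qf_sat (A := component A e) (sval w) (local_qf e q) <->
  qf_sat (A := glue) (inr (existT _ e w)) q.
Proof.
elim: q => [a [|c]|i [|c] [|d]|[|c] [|d]|q IH|q IHq q' IHq'] /=; try by split => // -[].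
- split => [wiw|[z /embed_inr -> //]]; by exists (sval w); rewrite ?embed_inner.
- rewrite qf_or_sat; split.
  + case=> q /In_map [c]; rewrite In_mem mem_filter => /andP[/eqP ecd _] -> /= b.
    by exists (cst (component A e) c); rewrite ?embed_cst ?ecd.
  + case=> z /(embed_inl cst_inj) [c -> ecd] b; exists (QBin i QX (QC c)) => //.
    by apply/In_map; exists c; rewrite // In_mem mem_filter mem_enum ecd eqxx.
- by case: eqP => [->|cd]; split => // -[].
- by rewrite IH.
- by rewrite IHq IHq'.
Qed.

Lemma local_set_sat e (r2 : env2 glue) Y z :
  sterm_val (proj_env2 e r2) (local_set e Y) z <-> comp_part e (sterm_val r2 Y) z.
Proof.
case: Y => [//|q] /=; rewrite /comp_part qf_nonconst_sat.
by split=> -[nz]; rewrite (embed_nonconst nz) -(local_qf_sat (exist _ z nz)).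
Qed.

End LocalSemantics.

Section GlueCounting.
Variables (Sig : Type) (m : nat) (X : Type) (arX : X -> nat) (n : nat) (G : hgraph arX n).
Variable A : forall x : X, model Sig m (arX x).
Local Notation U := (glue_univ G A).
Variable P : U -> Prop.

Definition glue_tag (u : U) : option (hE G) := if u is inr (existT e _) then Some e else None.

Lemma fin_card_vertex_part : fin_card (fun u => P u /\ glue_tag u = None) #|vertex_part P|.
Proof.
have vP : fin_card (fun v => P (inl v)) #|vertex_part P|.
  exists (enum (vertex_part P)); split; first exact/NoDup_uniq/enum_uniq.
  by split; rewrite ?cardE // => v; rewrite In_mem mem_enum inE; apply: rwP (asboolP _).
have inl_inj v v' : P (inl v) -> P (inl v') -> inl v = inl v' :> U -> v = v' by move=> _ _ [].
apply: fin_card_ext (fin_card_image inl_inj vP) _ => u.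
by split=> [[v Pv ->]|[]] //; case: u => [v|[]] // Pv _; exists v.
Qed.

Lemma fin_card_comp_part e N :
  fin_card (comp_part e P) N -> fin_card (fun u => P u /\ glue_tag u = Some e) N.
Proof.
move=> eP; have embed_inj z z' :
    comp_part e P z -> comp_part e P z' -> embed e z = embed e z' -> z = z'.
  by move=> [nz _] [nz' _]; rewrite (embed_nonconst nz) (embed_nonconst nz') => /glue_inr_inj [].
apply: fin_card_ext (fin_card_image embed_inj eP) _ => u; split.
- case=> z [nz Pz] ->.
  by rewrite (embed_nonconst nz) in Pz *.
- case: u => [v [_ //]|[e' w] [Pw /= [ee']]]; subst e'.
  exists (sval w); last by rewrite embed_inner.
  by split; [exact: svalP | rewrite embed_inner].
Qed.

Lemma fin_card_glue (N : hE G -> nat) :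
  (forall e, fin_card (comp_part e P) (N e)) -> fin_card P (#|vertex_part P| + \sum_e N e).
Proof.
move=> compN; have comps es : uniq es ->
    fin_card (fun u => P u /\ exists2 e, e \in es & glue_tag u = Some e) (\sum_(e <- es) N e).
  elim: es => [_|e es IH /= /andP[e_notin /IH esN]].
    by rewrite big_nil; apply: fin_card_ext fin_card0 _ => u; split => // -[_ []].
  have disj u : P u /\ glue_tag u = Some e ->
      (P u /\ exists2 e', e' \in es & glue_tag u = Some e') -> False.
    by move=> [_ ->] [_ [e' e'es [ee']]]; move: e_notin; rewrite ee' e'es.
  rewrite big_cons; apply: fin_card_ext (fin_card_union disj (fin_card_comp_part (compN e)) esN) _.
  move=> u; split => [[[Pu ue]|[Pu [e' e'es ue']]]|[Pu [e']]].
  - by split => //; exists e; rewrite ?inE ?eqxx.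
  - by split => //; exists e'; rewrite ?inE ?e'es ?orbT.
  - by rewrite inE => /orP[/eqP ->|e'es] ue'; [left | right; split => //; exists e'].
have disj u : P u /\ glue_tag u = None ->
    (P u /\ exists2 e, e \in index_enum (hE G) & glue_tag u = Some e) -> False.
  by move=> [_ ->] [_ []].
apply: fin_card_ext (fin_card_union disj fin_card_vertex_part (comps _ (index_enum_uniq _))) _.
move=> u; split => [[[]|[]]|Pu] //.
by case Eu: (glue_tag u) => [e|]; [right; split => //; exists e; rewrite ?mem_index_enum | left].
Qed.

Lemma fin_card_comp_part_exists e N : fin_card P N -> exists N', fin_card (comp_part e P) N'.
Proof.
case=> l [_ [Pl _]]; apply: (@fin_card_cover _ _ (pmap (to_comp e) l)) => z [nz Pz].
apply/In_pmap; exists (embed e z); first exact/Pl.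
by rewrite (embed_nonconst nz) to_comp_inner.
Qed.

Lemma card_mod_glue k p :
  card_mod (A := glue G A) P k p <->
  exists2 ks : hE G -> nat, forall e, card_mod (comp_part e P) (ks e) p &
    #|vertex_part P| + \sum_e ks e = k %[mod p].
Proof.
rewrite card_modE; split => [[N PN Nk]|[ks ksP ksk]].
- have [Ns NsP] := ClassicalEpsilon.choice _ (fun e => fin_card_comp_part_exists e PN).
  exists Ns => [e|]; first by apply/card_modE; exists (Ns e).
  by rewrite -Nk (fin_card_unique PN (fin_card_glue NsP)).
- have /ClassicalEpsilon.choice [Ns NsP] :
      forall e, exists N, fin_card (comp_part e P) N /\ N = ks e %[mod p].
    by move=> e; have /card_modE [N ? ?] := ksP e; exists N.
  have Ns_ks : \sum_e Ns e = \sum_e ks e %[mod p].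
    by rewrite -modn_summ -[RHS]modn_summ; congr (_ %% p); apply: eq_bigr => e _; case: (NsP e).
  exists (#|vertex_part P| + \sum_e Ns e); first by apply: fin_card_glue => e; case: (NsP e).
  by rewrite -modnDmr Ns_ks modnDmr.
Qed.

End GlueCounting.

Section Agreement.
Variables (Sig : Type) (m : nat) (X : Type) (arX : X -> nat) (n : nat) (G : hgraph arX n).
Variables A B : forall x : X, model Sig m (arX x).
Local Notation GA := (glue G A).
Local Notation GB := (glue G B).

Definition same_skeleton (r1 : env1 GA) (r2 : env2 GA) (r1' : env1 GB) (r2' : env2 GB) : Prop :=
  (forall i v, r1 i = Some (inl v) <-> r1' i = Some (inl v)) /\
  (forall j v, r2 j (inl v) <-> r2' j (inl v)).

Definition agree_locally (r1 : env1 GA) (r2 : env2 GA) (r1' : env1 GB) (r2' : env2 GB)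
    (f : cmso Sig m n) : Prop :=
  forall e g, In g (local_formulas e f) ->
    (sat (proj_env1 e r1) (proj_env2 e r2) g <-> sat (proj_env1 e r1') (proj_env2 e r2') g).

Definition transfers (f : cmso Sig m n) : Prop :=
  forall r1 r2 r1' r2', same_skeleton r1 r2 r1' r2' -> agree_locally r1 r2 r1' r2' f ->
    sat r1 r2 f -> sat r1' r2' f.

Lemma agree_locally_sat r1 r2 r1' r2' f e g :
  agree_locally r1 r2 r1' r2' f -> In g (local_formulas e f) ->
  sat (proj_env1 e r1) (proj_env2 e r2) g -> sat (proj_env1 e r1') (proj_env2 e r2') g.
Proof. by move=> agr /agr ->. Qed.

End Agreement.

Lemma same_skeleton_sym Sig m X arX n (G : hgraph arX n) (A B : forall x : X, model Sig m (arX x))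
    r1 r2 r1' r2' :
  same_skeleton (G := G) (A := A) (B := B) r1 r2 r1' r2' -> same_skeleton r1' r2' r1 r2.
Proof. by case=> sk1 sk2; split => [i v|j v]; rewrite ?sk1 ?sk2. Qed.

Lemma agree_locally_sym Sig m X arX n (G : hgraph arX n) (A B : forall x : X, model Sig m (arX x))
    r1 r2 r1' r2' f :
  agree_locally (G := G) (A := A) (B := B) r1 r2 r1' r2' f -> agree_locally r1' r2' r1 r2 f.
Proof. by move=> agr e g g_in; rewrite agr. Qed.

Section Transfer.
Variables (Sig : Type) (m : nat) (X : Type) (arX : X -> nat) (n : nat) (G : hgraph arX n).
Variables A B : forall x : X, model Sig m (arX x).
Hypotheses (A_inj : forall x, injective (cst (A x))) (B_inj : forall x, injective (cst (B x))).
Local Notation GA := (glue G A).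
Local Notation GB := (glue G B).

Section Atoms.
Variables (r1 : env1 GA) (r2 : env2 GA) (r1' : env1 GB) (r2' : env2 GB).
Hypothesis skel : same_skeleton r1 r2 r1' r2'.

Lemma fterm_val_vertex t v :
  fterm_val r1 t = Some (inl v : univ GA) -> fterm_val r1' t = Some (inl v : univ GB).
Proof. by case: t => [i|c] /= => [|[->]]; first case: skel => sk1 _ /sk1. Qed.

Lemma qf_sat_vertex q v : qf_sat (A := GA) (inl v) q <-> qf_sat (A := GB) (inl v) q.
Proof.
elim: q => [a [|c]|i [|c] [|d]|[|c] [|d]|q IH|q IHq q' IHq'] //=; try by split => -[->].
- by rewrite IH.
- by rewrite IHq IHq'.
Qed.

Lemma sterm_val_vertex Y v : sterm_val r2 Y (inl v) <-> sterm_val r2' Y (inl v).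
Proof. by case: Y => [j|q] /=; [case: skel | exact: qf_sat_vertex]. Qed.

Lemma vertex_part_eq Y : vertex_part (sterm_val r2 Y) = vertex_part (sterm_val r2' Y).
Proof. by apply/setP => v; rewrite !inE; apply/asboolP/asboolP => /sterm_val_vertex. Qed.

End Atoms.

Lemma transfer_un a t : transfers G A B (CUn a t).
Proof.
move=> r1 r2 r1' r2' _ agr [[v|[e w]] [tz /= wa]] //.
case: t tz agr => [x|c] //= xw agr.
have /(agree_locally_sat agr (or_introl erefl)) [z' [/proj_env1_Some [w' xw' <-] wa']] :
    sat (proj_env1 e r1) (proj_env2 e r2) (CUn a (FVar x)).
  by exists (sval w); rewrite /= (proj_env1_inner xw).
by exists (inr (existT _ e w')).
Qed.

Lemma transfer_bin i t u : transfers G A B (CBin i t u).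
Proof.
move=> r1 r2 r1' r2' skel agr [[v|[e w]] [z2 [tz [uz2 b]]]]; first by case: b.
case: b => z ez2 wz; case: t tz agr => [x|c] //= xw agr.
case: (const_or_inner z) => [[c zc]|[w2 zw2]]; subst z.
- rewrite (embed_cst A_inj) in ez2; subst z2.
  have c_in : In (CBin i (FVar x) (FCst c)) (local_formulas e (CBin i (FVar x) u : cmso Sig m n)).
    by rewrite /=; apply/In_cat; left; apply/In_map; exists c; first exact: In_enum.
  have /(agree_locally_sat agr c_in) [_ [_ [/proj_env1_Some [w1 xw1 <-] [[<-] wc]]]] :
      sat (proj_env1 e r1) (proj_env2 e r2) (CBin i (FVar x) (FCst c)).
    by exists (sval w), (cst (component A e) c); rewrite /= (proj_env1_inner xw).
  exists (inr (existT _ e w1)), (inl (hinc e c)); split => //.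
  split; first exact (fterm_val_vertex skel uz2).
  by exists (cst (component B e) c); rewrite ?(embed_cst B_inj).
- rewrite embed_inner in ez2; subst z2.
  case: u uz2 agr => [y|d] //= yw2 agr.
  have y_in : In (CBin i (FVar x) (FVar y))
      (local_formulas e (CBin i (FVar x) (FVar y) : cmso Sig m n)).
    by rewrite /=; apply/In_cat; right; left.
  have /(agree_locally_sat agr y_in)
      [_ [_ [/proj_env1_Some [w1 xw1 <-] [/proj_env1_Some [w2' yw2' <-] b]]]] :
      sat (proj_env1 e r1) (proj_env2 e r2) (CBin i (FVar x) (FVar y)).
    by exists (sval w), (sval w2); rewrite /= (proj_env1_inner xw) (proj_env1_inner yw2).
  exists (inr (existT _ e w1)), (inr (existT _ e w2')); do 2!split => //.
  by exists (sval w2'); rewrite ?embed_inner.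
Qed.

Lemma transfer_eq t u : transfers G A B (CEq t u).
Proof.
move=> r1 r2 r1' r2' skel agr [[v|[e w]] [tz uz]].
  by exists (inl v); split; [exact (fterm_val_vertex skel tz) | exact (fterm_val_vertex skel uz)].
case: t tz agr => [x|c] //= xw; case: u uz => [y|d] //= yw agr.
have /(agree_locally_sat agr (or_introl erefl)) [_ [/proj_env1_Some [w1 xw1 <-]]] :
    sat (proj_env1 e r1) (proj_env2 e r2) (CEq (FVar x) (FVar y)).
  by exists (sval w); rewrite /= (proj_env1_inner xw) (proj_env1_inner yw).
case/proj_env1_Some => w2 yw2 /inner_inj w21.
by exists (inr (existT _ e w1)); rewrite xw1 yw2 w21.
Qed.

Lemma transfer_mem t Y : transfers G A B (CMem t Y).
Proof.
move=> r1 r2 r1' r2' skel agr [[v|[e w]] [tz Yz]].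
  by exists (inl v); split; [exact (fterm_val_vertex skel tz) | apply/(sterm_val_vertex skel)].
case: t tz agr => [x|c] //= xw agr.
have /(agree_locally_sat agr (or_introl erefl)) [_ [/proj_env1_Some [w' xw' <-]]] :
    sat (proj_env1 e r1) (proj_env2 e r2) (CMem (FVar x) (local_set e Y)).
  exists (sval w); split; first exact: proj_env1_inner.
  by apply/(local_set_sat A_inj)/comp_part_inner.
move=> /(local_set_sat B_inj)/comp_part_inner Yw'.
by exists (inr (existT _ e w')).
Qed.

Lemma transfer_sub Y Z : transfers G A B (CSub Y Z).
Proof.
move=> r1 r2 r1' r2' skel agr YZ [v|[e w]].
  by move=> /(sterm_val_vertex skel) /YZ /(sterm_val_vertex skel).
have : sat (proj_env1 e r1) (proj_env2 e r2) (CSub (local_set e Y) (local_set e Z)).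
  by move=> z /(local_set_sat A_inj) [nz /YZ Zz]; apply/(local_set_sat A_inj).
move=> /(agree_locally_sat agr (or_introl erefl)) /(_ (sval w)).
by rewrite /= !(local_set_sat B_inj) !comp_part_inner.
Qed.

Lemma transfer_card Y k p : 0 < p -> transfers G A B (CCard Y k p).
Proof.
move=> p_gt0 r1 r2 r1' r2' skel agr /card_mod_glue [ks ksA ksk]; apply/card_mod_glue.
exists (fun e => ks e %% p) => [e|]; last first.
  by rewrite -(vertex_part_eq skel) -ksk -[RHS]modnDmr -modn_summ modnDmr.
have kse_in : In (CCard (local_set e Y) (ks e %% p) p) (local_formulas e (CCard Y k p)).
  by rewrite /=; apply/In_map; exists (ks e %% p); rewrite // In_mem mem_iota ltn_pmod.
have /(agree_locally_sat agr kse_in) /= :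
    sat (proj_env1 e r1) (proj_env2 e r2) (CCard (local_set e Y) (ks e %% p) p).
  by apply/card_mod_modn; apply: card_mod_ext (ksA e) => z; rewrite local_set_sat.
by apply: card_mod_ext => z; rewrite local_set_sat.
Qed.

Section Singleton.
Variables (r1 : env1 GA) (r2 : env2 GA) (r1' : env1 GB) (r2' : env2 GB) (Y : sterm Sig m n).
Hypothesis agr : agree_locally r1 r2 r1' r2' (CSing Y).

Lemma comp_part_empty_transfer e :
  (forall z, ~ comp_part e (sterm_val r2 Y) z) ->
  forall w : inner B e, ~ sterm_val r2' Y (inr (existT _ e w)).
Proof.
move=> emptyA w Yw.
have : sat (proj_env1 e r1) (proj_env2 e r2) (CSub (local_set e Y) (SCst qf_false)).
  by move=> z /(local_set_sat A_inj) /emptyA.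
move=> /(agree_locally_sat agr (or_intror (or_introl erefl))) /(_ (sval w)) /=.
by rewrite (local_set_sat B_inj) comp_part_inner => /(_ Yw); apply.
Qed.

Lemma comp_part_single_transfer e (w : inner A e) :
  (forall z, comp_part e (sterm_val r2 Y) z <-> z = sval w) ->
  exists w0 : inner B e, forall w', sterm_val r2' Y (inr (existT _ e w')) <-> w' = w0.
Proof.
move=> singleA.
have : sat (proj_env1 e r1) (proj_env2 e r2) (CSing (local_set e Y)).
  by exists (sval w) => z /=; rewrite (local_set_sat A_inj).
case/(agree_locally_sat agr (or_introl erefl)) => z0 /= singleB.
have [nz0 Yz0] : comp_part e (sterm_val r2' Y) z0 by apply/(local_set_sat B_inj)/singleB.
exists (exist _ z0 nz0) => w'; split => [Yw'|->]; last first.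
  by rewrite (embed_nonconst nz0) in Yz0.
by apply: inner_inj; apply/singleB/(local_set_sat B_inj)/comp_part_inner.
Qed.

End Singleton.

Lemma transfer_sing Y : transfers G A B (CSing Y).
Proof.
move=> r1 r2 r1' r2' skel agr [u Yu].
have emptyA e : (forall w : inner A e, inr (existT _ e w) <> u) ->
    forall z, ~ comp_part e (sterm_val r2 Y) z.
  by move=> ne z [nz /Yu]; rewrite (embed_nonconst nz); apply: ne.
case: u Yu emptyA => [v|[e w]] Yu emptyA.
- exists (inl v) => -[v'|[e' w']].
    by rewrite -(sterm_val_vertex skel) Yu; split => -[->].
  split => // Yw'; have ne w'' : inr (existT _ e' w'') <> inl v :> glue_univ G A by [].
  by case: (comp_part_empty_transfer agr (emptyA e' ne) Yw').
have singleA z : comp_part e (sterm_val r2 Y) z <-> z = sval w.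
  by split => [[nz /Yu /embed_inr //]|->]; apply/comp_part_inner/Yu.
have [w0 singleB] := comp_part_single_transfer agr singleA.
exists (inr (existT _ e w0)) => -[v'|[e' w']].
  by rewrite -(sterm_val_vertex skel) Yu.
have [e'e|ne] := eqVneq e' e; first by subst e'; rewrite singleB; split => [->|/glue_inr_inj].
split => [Yw'|/glue_inr_tag e'e]; last by rewrite e'e eqxx in ne.
have ne' w'' : inr (existT _ e' w'') <> inr (existT _ e w) :> glue_univ G A.
  by move/glue_inr_tag => e'e; rewrite e'e eqxx in ne.
by case: (comp_part_empty_transfer agr (emptyA e' ne') Yw').
Qed.

Lemma same_skeleton_upd1 r1 r2 r1' r2' x (u : univ GA) (u' : univ GB) :
  same_skeleton r1 r2 r1' r2' -> (forall v, u = inl v <-> u' = inl v) ->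
  same_skeleton (upd r1 x (Some u)) r2 (upd r1' x (Some u')) r2'.
Proof.
move=> [sk1 sk2] uu'; split => // i v; case: (i == x); last exact: sk1.
by split => -[/uu' ->].
Qed.

Lemma same_skeleton_upd2 r1 r2 r1' r2' Y (Z : univ GA -> Prop) (Z' : univ GB -> Prop) :
  same_skeleton r1 r2 r1' r2' -> (forall v, Z (inl v) <-> Z' (inl v)) ->
  same_skeleton r1 (upd r2 Y Z) r1' (upd r2' Y Z').
Proof. by move=> [sk1 sk2] ZZ'; split => // j v; case: (j == Y). Qed.

Lemma transfer_ex1 x g : transfers G A B g -> transfers G A B (CEx1 x g).
Proof.
move=> IH r1 r2 r1' r2' skel agr [u gu].
have agree_off e (u0 : univ GA) (u0' : univ GB) : to_comp e u0 = None -> to_comp e u0' = None ->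
    forall g', In g' (local_formulas e g) ->
    (sat (proj_env1 e (upd r1 x (Some u0))) (proj_env2 e r2) g' <->
     sat (proj_env1 e (upd r1' x (Some u0'))) (proj_env2 e r2') g').
  move=> u0e u0'e g' g'_in; rewrite !proj_env1_upd u0e u0'e -!sat_drop_var.
  by apply: agr; apply/In_cat; left; apply/In_map; exists g'.
case: u gu => [v|[e0 w]] gu.
  exists (inl v); apply: IH gu; first by apply: same_skeleton_upd1 => // v'; split => -[->].
  by move=> e; apply: agree_off.
pose gs := local_formulas e0 g.
pose envA := upd (proj_env1 e0 r1) x (Some (sval w)).
pose bs := truth_signs envA (proj_env2 e0 r2) gs.
have bs_in : In (CEx1 x (CAnd (CMem (FVar x) (SCst qf_nonconst)) (conj_signs bs gs)))
    (local_formulas e0 (CEx1 x g)).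
  by apply/In_cat; right; apply/In_map; exists bs => //; apply: In_truth_signs.
case: (agree_locally_sat agr bs_in) => [|z' [[z0 [/= xz' /qf_nonconst_sat nz']] signs]].
  exists (sval w); split; last exact: sat_conj_truth_signs.
  by exists (sval w); rewrite /= eqxx; split => //; apply/qf_nonconst_sat; exact: (svalP w).
rewrite eqxx in xz'; case: xz' nz' => <- {z0} nz'.
exists (inr (existT _ e0 (exist _ z' nz'))); apply: IH gu; first exact: same_skeleton_upd1.
move=> e g' g'_in; have [ee0|ne] := eqVneq e e0.
  by subst e; rewrite !proj_env1_upd !to_comp_inner; exact: conj_truth_signs_agree signs g' g'_in.
by apply: agree_off g' g'_in; apply: to_comp_other; apply/eqP; rewrite eq_sym.
Qed.

Lemma transfer_ex2 Y g : transfers G A B g -> transfers G A B (CEx2 Y g).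
Proof.
move=> IH r1 r2 r1' r2' skel agr [Z gZ].
have local_witness e : exists ZB : (univ (component B e) -> Prop),
    (forall z, ZB z -> nonconst e z) /\
    forall g', In g' (local_formulas e g) ->
    (sat (proj_env1 e r1) (upd (proj_env2 e r2) Y (comp_part e Z)) g' <->
     sat (proj_env1 e r1') (upd (proj_env2 e r2') Y ZB) g').
  pose gs := local_formulas e g.
  pose bs := truth_signs (proj_env1 e r1) (upd (proj_env2 e r2) Y (comp_part e Z)) gs.
  have bs_in : In (CEx2 Y (CAnd (CSub (SVar Y) (SCst qf_nonconst)) (conj_signs bs gs)))
      (local_formulas e (CEx2 Y g)).
    by apply/In_map; exists bs => //; apply: In_truth_signs.
  case: (agree_locally_sat agr bs_in) => [|ZB [/= ZB_nc signs]].
    exists (comp_part e Z); split; last exact: sat_conj_truth_signs.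
    by move=> z /=; rewrite eqxx => -[nz _]; apply/qf_nonconst_sat.
  exists ZB; split; last exact: conj_truth_signs_agree signs.
  by move=> z ZBz; apply/qf_nonconst_sat/ZB_nc; rewrite /= eqxx.
pose ZB e := proj1_sig (constructive_indefinite_description _ (local_witness e)).
have ZBP e := proj2_sig (constructive_indefinite_description _ (local_witness e)).
pose Z' (u : univ GB) := match u with inl v => Z (inl v) | inr (existT e w) => ZB e (sval w) end.
have comp_part_Z' e : comp_part e Z' = ZB e.
  apply: functional_extensionality => z; apply: propositional_extensionality; split.
    by case=> nz; rewrite (embed_nonconst nz).
  move=> ZBz; have nz := (ZBP e).1 z ZBz; split => //.
  by rewrite (embed_nonconst nz).
exists Z'; apply: IH gZ; first exact: same_skeleton_upd2.
by move=> e g' g'_in; rewrite !proj_env2_upd comp_part_Z'; exact: (ZBP e).2.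
Qed.

End Transfer.

Lemma glue_transfer Sig m X arX n (G : hgraph arX n) M (f : cmso Sig m n) :
  moduli_in M f -> forall A B : forall x : X, model Sig m (arX x),
  (forall x, injective (cst (A x))) -> (forall x, injective (cst (B x))) -> transfers G A B f.
Proof.
elim: f => [a t|i t u|t u|t Y|Y k p|Y Z|Y|g IH|g IHg h IHh|x g IH|Y g IH] /= Mf A B A_inj B_inj.
- exact: transfer_un.
- by apply: transfer_bin.
- exact: transfer_eq.
- by apply: transfer_mem.
- by apply: transfer_card; case: Mf.
- by apply: transfer_sub.
- by apply: transfer_sing.
- move=> r1 r2 r1' r2' skel agr ngA gB; apply: ngA.
  exact: (IH Mf B A B_inj A_inj _ _ _ _ (same_skeleton_sym skel) (agree_locally_sym agr) gB).
- case: Mf => Mg Mh r1 r2 r1' r2' skel agr [g_sat h_sat]; split.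
  + apply: (IHg Mg A B A_inj B_inj _ _ _ _ skel _ g_sat) => e g' g'_in.
    by apply: agr; apply/In_cat; left.
  + apply: (IHh Mh A B A_inj B_inj _ _ _ _ skel _ h_sat) => e h' h'_in.
    by apply: agr; apply/In_cat; right.
- by apply: transfer_ex1; apply: IH.
- by apply: transfer_ex2; apply: IH.
Qed.

Lemma glue_rM_equiv Sig m X arX n (G : hgraph arX n) (A B : forall x : X, model Sig m (arX x))
    r M :
  (forall x, injective (cst (A x))) -> (forall x, injective (cst (B x))) ->
  (forall x, rM_equiv r M (A x) (B x)) -> rM_equiv r M (glue G A) (glue G B).
Proof.
move=> A_inj B_inj AB f f_sent f_rank f_mod.
have no_sets C e : proj_env2 (G := G) (A := C) e (fun _ _ => False) = fun _ _ => False.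
  by apply: functional_extensionality => j; apply: functional_extensionality => z;
    apply: propositional_extensionality; split => // -[].
have agr : agree_locally (G := G) (A := A) (B := B)
    (fun _ => None) (fun _ _ => False) (fun _ => None) (fun _ _ => False) f.
  move=> e g g_in; have [? ? ?] := local_formulas_fragment (And3 f_rank f_mod f_sent) g_in.
  by rewrite !no_sets; apply: AB.
have skel : same_skeleton (G := G) (A := A) (B := B)
    (fun _ => None) (fun _ _ => False) (fun _ => None) (fun _ _ => False) by [].
split => f_sat.
  exact: (glue_transfer f_mod A_inj B_inj skel agr f_sat).
exact: (glue_transfer f_mod B_inj A_inj (same_skeleton_sym skel) (agree_locally_sym agr) f_sat).
Qed.

Lemma resolve_cases (S : Type) (arS : S -> nat) k (H : hgraph arS k) (v : hV H) :
  (exists2 i, resolve v = inl i & hsrc H i = v) \/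
  (exists P, resolve v = inr (exist _ v P)).
Proof.
rewrite /resolve; move: (pick_none_nonsrc (v := v)).
case: pickP => [i /eqP iv|none] ns; first by left; exists i.
by right; exists (ns erefl).
Qed.

Section FlatteningIso.
Variables (Sig : finType) (arS : Sig -> nat) (X : Type) (arX : X -> nat) (n : nat).
Variables (G : hgraph arX n) (eta : forall x : X, hgraph arS (arX x)).
Hypothesis eta_wf : forall x, wf_hgraph (eta x).
Local Notation A := (fun x => mdl (eta x)).
Local Notation F := (flat_subst G eta).
Local Notation U := (glue_univ G A).
Local Notation NS := (flatNS_fam (G := G) eta).
Local Notation FE := (flatE_fam (G := G) eta).

Lemma nonconst_nonsrc (e : hE G) (vv : hV (eta (hlab e))) :
  nonconst (A := A) e (inl vv) -> nonsrc vv.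
Proof. by move=> nc; apply/forallP => i; apply/eqP => iv; apply: (nc i); rewrite /= iv. Qed.

Lemma nonsrc_nonconst (e : hE G) (vv : hV (eta (hlab e))) :
  nonsrc vv -> nonconst (A := A) e (inl vv).
Proof. by move=> /forallP ns c [cv]; have := ns c; rewrite cv eqxx. Qed.

Lemma nonconst_edge (e : hE G) (f : hE (eta (hlab e))) : nonconst (A := A) e (inr f).
Proof. by []. Qed.

Definition inner_to_flat (e : hE G) (w : inner A e) : univ (mdl F) :=
  let: exist z nz := w in
  match z as z return nonconst (A := A) e z -> univ (mdl F) with
  | inl vv => fun nvv => inl (inr (Tagged NS (exist _ vv (nonconst_nonsrc nvv))))
  | inr f => fun _ => inr (Tagged FE f)
  end nz.

Definition to_flat (u : U) : univ (mdl F) :=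
  match u with inl v => inl (inl v) | inr (existT e w) => inner_to_flat w end.

Definition of_flat (y : univ (mdl F)) : U :=
  match y with
  | inl (inl v) => inl v
  | inl (inr (existT e (exist vv ns))) =>
      inr (existT (inner A) e (exist _ (inl vv) (@nonsrc_nonconst e vv ns)))
  | inr (existT e f) => inr (existT (inner A) e (exist _ (inr f) (@nonconst_edge e f)))
  end.

Lemma to_flatK : cancel to_flat of_flat.
Proof.
case=> [v|[e [[vv|f] nz]]] //=.
- by rewrite (proof_irrelevance _ (@nonsrc_nonconst _ _ _) nz).
- by rewrite (proof_irrelevance _ (@nonconst_edge _ _) nz).
Qed.

Lemma of_flatK : cancel of_flat to_flat.
Proof.
by case=> [[v|[e [vv ns]]]|[e f]] //=; rewrite (proof_irrelevance _ (nonconst_nonsrc _) ns).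
Qed.

Lemma to_flat_embed_inc (e : hE G) (f : hE (eta (hlab e))) j :
  to_flat (embed (A := A) e (inl (hinc f j))) = inl (@flat_inc _ _ _ _ _ G eta (Tagged FE f) j).
Proof.
have src_inj := (eta_wf (hlab e)).2.
rewrite /embed /flat_inc /=; case: excluded_middle_informative => [is_src|not_src].
  case: constructive_indefinite_description => c /= [cj].
  case: (resolve_cases (hinc f j)) => [[i -> ij]|[ns ->]].
    by rewrite (src_inj _ _ (etrans ij (esym cj))).
  by have := ns; move/forallP/(_ c); rewrite cj eqxx.
case: (resolve_cases (hinc f j)) => [[i -> ij]|[ns ->]].
  by case: not_src; exists i; rewrite /= ij.
by rewrite /= (proof_irrelevance _ (nonconst_nonsrc _) ns).
Qed.

Lemma glue_mdl_iso : model_iso (glue G A) (mdl F).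
Proof.
exists to_flat, of_flat; split; first exact: to_flatK.
split; first exact: of_flatK.
split; first by move=> a [v|[e [[vv|f] nz]]].
split=> // i [v|[e [[vv|f] nz]]] u2 /=.
- by split => // -[].
- by split => // -[[v'|f'] _ []].
split=> [[[v'|f'] <- //] [ij <-]|].
  by rewrite to_flat_embed_inc; exists ij.
case E: (to_flat u2) => [y|y] // [ij yj]; exists (inl (hinc f (Ordinal ij))); last by exists ij.
by apply: (can_inj to_flatK); rewrite to_flat_embed_inc E yj.
Qed.

End FlatteningIso.

Lemma in_image_cst_inj (Sig : finType) (arS : Sig -> nat) k (A : model Sig (maxar arS) k) :
  in_image A -> injective (cst A).
Proof.
case=> K [[_ src_inj] [h [_ [_ [_ [_ [_ h_cst]]]]]]] c c' /(congr1 h).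
by rewrite !h_cst => -[/src_inj].
Qed.

Theorem lemma4p11 (Sig : finType) (arS : Sig -> nat)
    (X : Type) (arX : X -> nat) (n : nat) (G : hgraph arX n) :
  wf_hgraph G ->
  exists f : (forall x : X, model Sig (maxar arS) (arX x)) ->
             model Sig (maxar arS) n,
    cmso_compatible (fun x (A : model Sig (maxar arS) (arX x)) => in_image A) f /\
    (forall eta : forall x : X, hgraph arS (arX x),
       (forall x, wf_hgraph (eta x)) ->
       model_iso (f (fun x => mdl (eta x))) (mdl (flat_subst G eta))).
Proof.
move=> _; exists (glue G); split; last by move=> eta eta_wf; apply: glue_mdl_iso.
move=> r M A B A_img B_img AB.
by apply: glue_rM_equiv => // x; apply: in_image_cst_inj.
Qed.
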